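(* Let $R$ be a commutative multiplicative hyperring with identity, let $\alpha$ be a good endomorphism of $R$, and let $I$ be an $\alpha$-prime hyperideal of $R$. If $x\in R$ and $x^n\subseteq I$ for some $n\in\mathbb N$, then $\alpha(x)\in I$.
   Context: A multiplicative hyperring is an abelian group $(R,+)$ with a hyperoperation $\circ:R\times R\to \mathcal P^*(R)$ (nonempty subsets) such that $a\circ(b\circ c)=(a\circ b)\circ c$, $a\circ(b+c)\subseteq a\circ b+a\circ c$, $(b+c)\circ a\subseteq b\circ a+c\circ a$, and $a\circ(-b)=(-a)\circ b=-(a\circ b)$. Products of subsets are unions of elementwise products, and $x^n=x\circ\cdots\circ x$ ($n$ factors). Commutative means $a\circ b=b\circ a$. An identity $1$ satisfies $a\in1\circ a$ for all $a$. A hyperideal is a nonempty $I\subseteq R$ closed under subtraction with $r\circ x\subseteq I$ for $r\in R$, $x\in I$. Standing assumption: every hyperideal is a $\mathbf C$-hyperideal, i.e. for every finite product $A=r_1\circ\cdots\circ r_n$, $A\cap I\ne\emptyset$ implies $A\subseteq I$. A good endomorphism $\alpha$ satisfies $\alpha(x+y)=\alpha(x)+\alpha(y)$ and $\alpha(x\circ y)=\alpha(x)\circ\alpha(y)$. A hyperideal $I$ is $\alpha$-prime if for all $x,y$, $x\circ y\subseteq I$ implies $x\in I$ or $\alpha(y)\in I$. *)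

(* the additive abelian group (R,+) is a zmodType;
   the hyperoperation is a function R -> R -> (R -> Prop) (a hsubset of R). *)
From mathcomp Require Import all_boot all_algebra.
Set Implicit Arguments. Unset Strict Implicit. Unset Printing Implicit Defensive.
Import GRing.Theory.
Local Open Scope ring_scope.

Section Hyperring.
Variable R : zmodType.

Definition hset := R -> Prop.
Definition hsubset (A B : hset) : Prop := forall z, A z -> B z.
Definition seteq (A B : hset) : Prop := forall z, A z <-> B z.
Definition sing (a : R) : hset := fun z => z = a.

Variable hm : R -> R -> hset.

Definition setmul (A B : hset) : hset :=
  fun z => exists a b, A a /\ B b /\ hm a b z.
Definition setadd (A B : hset) : hset :=
  fun z => exists a b, A a /\ B b /\ z = a + b.
Definition setopp (A : hset) : hset := fun z => exists a, A a /\ z = - a.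

Definition hprod (r : R) (rs : seq R) : hset :=
  foldl (fun A x => setmul A (sing x)) (sing r) rs.
(* x^n = x o ... o x (n factors), meaningful for n >= 1 *)
Definition hpow (x : R) (n : nat) : hset := hprod x (nseq n.-1 x).

Definition multiplicative_hyperring : Prop :=
  [/\ (forall a b, exists z, hm a b z),
      (forall a b c, seteq (setmul (sing a) (hm b c)) (setmul (hm a b) (sing c))),
      (forall a b c, hsubset (hm a (b + c)) (setadd (hm a b) (hm a c))),
      (forall a b c, hsubset (hm (b + c) a) (setadd (hm b a) (hm c a))) &
      (forall a b, seteq (hm a (- b)) (setopp (hm a b)) /\
                   seteq (hm (- a) b) (setopp (hm a b)))].

Definition hcommutative : Prop := forall a b, seteq (hm a b) (hm b a).
Definition has_identity (one : R) : Prop := forall a, hm one a a.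

Definition hyperideal (I : hset) : Prop :=
  [/\ (exists x, I x),
      (forall x y, I x -> I y -> I (x - y)) &
      (forall r x, I x -> hsubset (hm r x) I)].

Definition C_hyperideal (I : hset) : Prop :=
  forall r rs, (exists z, hprod r rs z /\ I z) -> hsubset (hprod r rs) I.

Definition good_endomorphism (alpha : R -> R) : Prop :=
  (forall x y, alpha (x + y) = alpha x + alpha y) /\
  (forall x y, seteq (fun z => exists w, hm x y w /\ z = alpha w)
                     (hm (alpha x) (alpha y))).

Definition alpha_prime (alpha : R -> R) (I : hset) : Prop :=
  hyperideal I /\
  (forall x y, hsubset (hm x y) I -> I x \/ I (alpha y)).

End Hyperring.

From mathcomp Require Import all_boot all_algebra.

Set Implicit Arguments.
Unset Strict Implicit.
Unset Printing Implicit Defensive.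

(* Since x^(n+1) = x^n o x, pick any a in x^n: then a o x is
   inside I, so alpha-primeness gives a in I (and then all of x^n lies in I, I
   being a C-hyperideal) or alpha x in I.  In the base case x in I, and
   primeness applied to 1 o x, which lies in I, gives 1 in I or alpha x in I;
   if 1 is in I, so is alpha x, an element of (alpha x) o 1. *)

Section HyperPowers.
Variables (R : zmodType) (hm : R -> R -> hset R).

Lemma hpow1 (x : R) : hpow hm x 1 = sing x.
Proof. by []. Qed.

Lemma hpowS (x : R) (n : nat) :
  hpow hm x n.+2 = setmul hm (hpow hm x n.+1) (sing x).
Proof.
by rewrite /hpow /hprod -[n.+2.-1]/n.+1 -addn1 nseqD cats1 foldl_rcons addn1.
Qed.

Hypothesis hm_total : forall a b, exists z, hm a b z.

Lemma hpow_nonempty (x : R) (n : nat) : exists z, hpow hm x n.+1 z.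
Proof.
elim: n => [|n [a Ha]]; first by exists x.
have [z Hz] := hm_total a x.
by exists z; rewrite hpowS; exists a, x.
Qed.

End HyperPowers.

Section AlphaPrime.
Variables (R : zmodType) (hm : R -> R -> hset R) (alpha : R -> R) (I : hset R).
Hypothesis I_alpha_prime : alpha_prime hm alpha I.

Lemma alpha_prime_mem (one : R) (x : R) :
  hcommutative hm -> has_identity hm one -> I x -> I (alpha x).
Proof.
case: I_alpha_prime => [[_ _ I_absorb] I_prime] hm_comm one_id Ix.
have [I_one | //] := I_prime one x (I_absorb one x Ix).
by apply: (I_absorb (alpha x) one I_one); apply/hm_comm.
Qed.

Lemma alpha_prime_hpowS (x : R) (n : nat) :
  (forall a b, exists z, hm a b z) -> C_hyperideal hm I ->
  hsubset (hpow hm x n.+2) I -> hsubset (hpow hm x n.+1) I \/ I (alpha x).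
Proof.
move=> hm_total I_C powI.
have [a Ha] := hpow_nonempty hm_total x n.
have axI : hsubset (hm a x) I.
  by move=> z Hz; apply: powI; rewrite hpowS; exists a, x.
have [Ia | ] := I_alpha_prime.2 a x axI; last by right.
by left; apply: (I_C x (nseq n x)); exists a.
Qed.

End AlphaPrime.

Theorem mainTheorem8 (R : zmodType) (hm : R -> R -> hset R) (one : R)
  (alpha : R -> R) (I : hset R) :
  multiplicative_hyperring hm ->
  hcommutative hm ->
  has_identity hm one ->
  (forall J : hset R, hyperideal hm J -> C_hyperideal hm J) ->
  good_endomorphism hm alpha ->
  alpha_prime hm alpha I ->
  forall (x : R) (n : nat), (0 < n)%N ->
    hsubset (hpow hm x n) I -> I (alpha x).
Proof.
move=> [hm_total _ _ _ _] hm_comm one_id all_C _ I_prime x [//|n] _.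
have I_C := all_C I I_prime.1.
elim: n => [|n IHn] powI.
  by apply: (alpha_prime_mem I_prime hm_comm one_id); apply: powI; rewrite hpow1.
by have [/IHn | ] := alpha_prime_hpowS I_prime hm_total I_C powI.
Qed.
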